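(* A (closed linear) subspace $X$ of $C([0,\omega_1])$ is separable if and only if there is a countable ordinal $\sigma$ such that $X$ is contained in the range of the projection $\widetilde{P}_\sigma$.
   Context: $\omega_1$ is the first uncountable ordinal; $[0,\omega_1]$ has the order topology and $C([0,\omega_1])$ is the Banach space of continuous scalar-valued functions with sup norm. For a countable ordinal $\sigma$, $\widetilde{P}_\sigma$ is the operator on $C([0,\omega_1])$ given by $\widetilde{P}_\sigma f=f\cdot\mathbf{1}_{[0,\sigma]}+f(\omega_1)\mathbf{1}_{[\sigma+1,\omega_1]}$. *)

From HB Require Import structures.
From mathcomp Require Import all_boot all_order all_algebra.
From mathcomp Require Import all_classical all_reals.
Set Implicit Arguments. Unset Strict Implicit. Unset Printing Implicit Defensive.
Import Order.TTheory GRing.Theory Num.Theory.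
Local Open Scope classical_set_scope.
Local Open Scope ring_scope.

(* The compact ordinal interval [0, w1] is modelled by an abstract totally
   ordered type T with greatest element w1 satisfying the defining properties
   of [0, omega_1]: T is well ordered, every element x other than w1 (i.e. every
   countable ordinal) has a countable initial segment [0, x], and the set of
   elements below w1 is uncountable.  These properties determine [0, omega_1]
   up to order isomorphism. *)
Definition is_omega1_interval (d : Order.disp_t) (T : orderType d) (w1 : T) : Prop :=
  [/\ (forall A : set T, A !=set0 -> exists2 x, A x & forall y, A y -> (x <= y)%O),
      (forall x : T, (x <= w1)%O),
      (forall x : T, x != w1 -> countable [set y : T | (y <= x)%O]) &
      ~ countable [set y : T | (y < w1)%O]].

Definition ord_nbhd (d : Order.disp_t) (T : orderType d) (x : T) (U : set T) : Prop :=
  exists (a b : option T),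
    [/\ (if a is Some a' then (a' < x)%O else true),
        (if b is Some b' then (x < b')%O else true) &
        (forall y : T, (if a is Some a' then (a' < y)%O else true) ->
                       (if b is Some b' then (y < b')%O else true) -> U y)].

Definition ord_continuous (d : Order.disp_t) (T : orderType d) (R : realType)
    (f : T -> R) : Prop :=
  forall (x : T) (e : R), 0 < e -> ord_nbhd x [set y | `|f y - f x| < e].

Definition CK (d : Order.disp_t) (T : orderType d) (R : realType) : set (T -> R) :=
  [set f | ord_continuous f].

Definition sup_close (d : Order.disp_t) (T : orderType d) (R : realType)
    (f g : T -> R) (e : R) : Prop :=
  forall t : T, `|f t - g t| <= e.

Definition closed_subspace (d : Order.disp_t) (T : orderType d) (R : realType)
    (X : set (T -> R)) : Prop :=
  [/\ X `<=` @CK d T R,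
      X (fun _ => 0),
      (forall f g, X f -> X g -> X (fun t => f t + g t)),
      (forall (c : R) f, X f -> X (fun t => c * f t)) &
      (forall f, @CK d T R f ->
         (forall e : R, 0 < e -> exists2 g, X g & sup_close f g e) -> X f)].

Definition separable_sub (d : Order.disp_t) (T : orderType d) (R : realType)
    (X : set (T -> R)) : Prop :=
  exists2 D : set (T -> R), D `<=` X /\ countable D &
    forall f, X f -> forall e : R, 0 < e -> exists2 g, D g & sup_close f g e.

Definition Ptilde (d : Order.disp_t) (T : orderType d) (R : realType)
    (w1 sigma : T) (f : T -> R) : T -> R :=
  fun t => if (t <= sigma)%O then f t else f w1.

Definition range_Ptilde (d : Order.disp_t) (T : orderType d) (R : realType)
    (w1 sigma : T) : set (T -> R) :=
  [set g | exists2 f, @CK d T R f & g = Ptilde w1 sigma f].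

From HB Require Import structures.
From mathcomp Require Import all_boot all_order all_algebra.
From mathcomp Require Import all_classical all_reals.
From mathcomp Require Import ring lra.
Set Implicit Arguments. Unset Strict Implicit. Unset Printing Implicit Defensive.
Import Order.TTheory GRing.Theory Num.Theory.
Local Open Scope classical_set_scope.
Local Open Scope ring_scope.

(* Since omega_1 has uncountable cofinality, countably many countable ordinals
   are bounded by a countable ordinal.  Applied to the epsilon-tails of a
   continuous f, this shows that f is constant on a tail (y, w1] with y
   countable; a countable dense subset of X then has a common such tail, which
   passes to its closure, so X lies in the range of P~_sigma.  Conversely,
   [0, sigma] is countable and well ordered, so a continuous function on it is a
   uniform limit of rational step functions jumping only at points of
   [0, sigma]; these form a countable family that is dense in the range of
   P~_sigma. *)

Lemma eq_norm_subr_le (R : numFieldType) (x y : R) :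
  (forall e : R, 0 < e -> `|x - y| <= e) -> x = y.
Proof.
move=> close; apply/eqP; rewrite -subr_eq0 -normr_le0.
by apply/ler_addgt0Pr => e e_gt0; rewrite add0r close.
Qed.

Lemma exists_ratr_near (R : realType) (x e : R) : 0 < e ->
  exists q : rat, `|x - ratr q| < e.
Proof.
move=> e_gt0; have : x - e < x + e by lra.
move=> /rat_in_itvoo [q]; rewrite in_itv /= => /andP [xq qx].
by exists q; rewrite ltr_norml; apply/andP; split; lra.
Qed.

Lemma countable_sub_range T (A : set T) (x0 : T) :
  countable A -> exists e : nat -> T, A `<=` range e.
Proof.
move=> /countable_injP [f f_inj].
have : forall n, exists y, (exists2 x, A x & f x = n) -> A y /\ f y = n.
  move=> n; have [[x Ax fx]|no_x] := pselect (exists2 x, A x & f x = n).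
    by exists x => _; split.
  by exists x0 => /no_x.
move=> /choice [e eP]; exists e => x Ax; exists (f x) => //.
have [Aex fex] := eP (f x) (ex_intro2 _ _ x Ax erefl).
by apply: f_inj; rewrite ?inE.
Qed.

Section WellOrder.
Variables (d : Order.disp_t) (T : orderType d).
Hypothesis wo : forall A : set T, A !=set0 ->
  exists2 x, A x & forall y, A y -> (x <= y)%O.

Lemma wellorder_ind (P : T -> Prop) :
  (forall b, (forall a, (a < b)%O -> P a) -> P b) -> forall b, P b.
Proof.
move=> IH b; apply: contrapT => nPb.
have [x nPx x_min] := @wo [set z | ~ P z] (ex_intro _ b nPb).
apply: nPx; apply: IH => a ax; apply: contrapT => nPa.
by have := x_min a nPa; rewrite leNgt ax.
Qed.

End WellOrder.

Section Omega1.
Variables (d : Order.disp_t) (T : orderType d) (w1 : T).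
Hypothesis omega1 : is_omega1_interval w1.

Lemma countable_bounded_below_top I (A : set I) (a : I -> T) :
  countable A -> (forall i, A i -> a i != w1) ->
  exists2 y, y != w1 & forall i, A i -> (a i < y)%O.
Proof.
case: omega1 => _ _ cnt unc cA a_w1; apply: contrapT => no_bound; apply: unc.
apply: (@sub_countable _ _ _ (\bigcup_(i in A) [set y | (y <= a i)%O])); last first.
  by apply: bigcup_countable => // i Ai; apply/cnt/a_w1.
apply: subset_card_le => y /= y_w1.
have : ~ (forall i, A i -> (a i < y)%O).
  by move=> y_ub; apply: no_bound; exists y; rewrite ?lt_eqF.
move=> /existsNP [i] /not_implyP [Ai] /negP; rewrite -leNgt => yai.
by exists i.
Qed.

Lemma exists_below_top : exists y : T, y != w1.
Proof.
have [y y_w1 _] := @countable_bounded_below_top _ set0 id (countable0 _) (fun _ => False_ind _).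
by exists y.
Qed.

Lemma ord_continuous_near_top (R : realType) (f : T -> R) (e : R) :
  ord_continuous f -> 0 < e ->
  exists2 a, a != w1 & forall t, (a < t)%O -> `|f t - f w1| < e.
Proof.
move=> f_cont e_gt0; have [a [b [a_w1 w1_b near_w1]]] := f_cont w1 e e_gt0.
case: b w1_b near_w1 => [b|] w1_b near_w1.
  by case: omega1 => _ top _ _; have := top b; rewrite leNgt w1_b.
case: a a_w1 near_w1 => [a|] a_w1 near_w1.
  by exists a => [|t a_t]; [rewrite lt_eqF | apply: near_w1].
by have [y y_w1] := exists_below_top; exists y => // t _; apply: near_w1.
Qed.

Lemma ord_continuous_tail_const (R : realType) (f : T -> R) :
  ord_continuous f -> exists2 y, y != w1 & forall t, (y < t)%O -> f t = f w1.
Proof.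
move=> f_cont.
have /choice [a a_near] : forall n : nat, exists a, a != w1 /\
    forall t, (a < t)%O -> `|f t - f w1| < n.+1%:R^-1.
  move=> n; have [|a a_w1 a_near] := ord_continuous_near_top f_cont (e := n.+1%:R^-1).
    by rewrite invr_gt0.
  by exists a.
have [y y_w1 y_ub] :=
  countable_bounded_below_top (countableP [set: nat]) (fun n _ => (a_near n).1).
exists y => // t yt; apply: eq_norm_subr_le => e e_gt0.
have [n ne] := ltr_add_invr e_gt0; rewrite add0r in ne.
by apply/ltW/(lt_trans _ ne)/(a_near n).2/(lt_trans (y_ub n I)).
Qed.

Lemma separable_sub_tail_const (R : realType) (X : set (T -> R)) :
  X `<=` @CK d T R -> separable_sub X ->
  exists2 sigma, sigma != w1 & forall f t, X f -> (sigma < t)%O -> f t = f w1.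
Proof.
move=> XC [D [DX D_cnt] D_dense].
have /choice [a a_tail] : forall g : T -> R, exists y, D g ->
    y != w1 /\ forall t, (y < t)%O -> g t = g w1.
  move=> g; have [Dg|nDg] := pselect (D g); last by exists w1.
  by have [y y_w1 y_tail] := ord_continuous_tail_const (XC _ (DX _ Dg)); exists y.
have [sigma sigma_w1 sigma_ub] :=
  countable_bounded_below_top D_cnt (fun g Dg => (a_tail g Dg).1).
exists sigma => // f t Xf sigma_t; apply: eq_norm_subr_le => e e_gt0.
have [g Dg fg] := D_dense f Xf (e / 2) (divr_gt0 e_gt0 (ltr0Sn _ 1)).
have gt : g t = g w1.
  by apply: (a_tail g Dg).2; apply: lt_trans sigma_t; apply: sigma_ub.
have := fg t; have := fg w1.
have -> : f t - f w1 = (f t - g t) - (f w1 - g w1) by rewrite gt; ring.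
move=> fgw1 fgt; apply: (le_trans (ler_normB _ _)); lra.
Qed.

End Omega1.

Section StepFunctions.
Variables (d : Order.disp_t) (T : orderType d) (R : realType) (e : nat -> T).

Fixpoint step_fun (L : seq (nat * rat)) (t : T) : R :=
  if L is p :: L' then (if (t <= e p.1)%O then ratr p.2 else step_fun L' t) else 0.

Lemma step_fun_cat L1 L2 t :
  step_fun (L1 ++ L2) t =
  if has (fun p => (t <= e p.1)%O) L1 then step_fun L1 t else step_fun L2 t.
Proof. by elim: L1 => //= p L1 IH; case: ifP. Qed.

Lemma ord_continuous_left_ratr (g : T -> R) (b : T) (del : R) :
  ord_continuous g -> 0 < del -> exists (q : rat) (a : option T),
    (if a is Some a' then (a' < b)%O else true) /\
    forall t, (t <= b)%O -> (if a is Some a' then (a' < t)%O else true) ->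
      `|g t - ratr q| <= del.
Proof.
move=> g_cont del_gt0; have del2_gt0 : 0 < del / 2 by rewrite divr_gt0.
have [q gbq] := exists_ratr_near (g b) del2_gt0.
have [a [c [a_b b_c near_b]]] := g_cont b _ del2_gt0.
exists q, a; split => // t tb a_t.
have t_c : is_true (if c is Some c' then (t < c')%O else true).
  by case: c b_c {near_b} => // c' b_c; apply: le_lt_trans b_c.
have /= gtb := near_b t a_t t_c.
have -> : g t - ratr q = (g t - g b) + (g b - ratr q) by ring.
by apply: (le_trans (ler_normD _ _)); lra.
Qed.

Hypothesis wo : forall A : set T, A !=set0 ->
  exists2 x, A x & forall y, A y -> (x <= y)%O.

(* Induction along the well order: continuity at b gives a rational step on a
   left neighbourhood (a, b], and the induction hypothesis covers [0, a]. *)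
Lemma step_fun_approx (g : T -> R) (sigma : T) (del : R) :
  [set b | (b <= sigma)%O] `<=` range e -> ord_continuous g -> 0 < del ->
  forall b, (b <= sigma)%O -> exists L,
    [/\ all (fun p => (e p.1 <= b)%O) L, has (fun p => (b <= e p.1)%O) L &
        forall t, (t <= b)%O -> `|g t - step_fun L t| <= del].
Proof.
move=> e_onto g_cont del_gt0; apply: (wellorder_ind wo) => b IH b_sigma.
have [i _ ei] := e_onto b b_sigma.
have [q [a [a_b near_b]]] := ord_continuous_left_ratr b g_cont del_gt0.
case: a a_b near_b => [a|] a_b near_b; last first.
  by exists [:: (i, q)]; rewrite /= ei lexx; split=> // t tb; rewrite tb; apply: near_b.
have [L [L_le_a L_ge_a L_approx]] := IH a a_b (le_trans (ltW a_b) b_sigma).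
exists (L ++ [:: (i, q)]); split.
- rewrite all_cat /= ei lexx !andbT.
  by apply: sub_all L_le_a => p /= pa; apply: le_trans pa (ltW a_b).
- by rewrite has_cat /= ei lexx orbT.
move=> t tb; rewrite step_fun_cat; case: (leP t a) => [ta|a_t].
  rewrite (sub_has _ L_ge_a) ?L_approx // => p /=; exact: le_trans ta.
have -> : has (fun p => (t <= e p.1)%O) L = false.
  apply/negbTE/hasPn => p pL; move/allP: L_le_a => /(_ p pL) /= pa.
  by rewrite -ltNge; apply: le_lt_trans pa a_t.
by rewrite /= ei tb; apply: near_b.
Qed.

End StepFunctions.

Lemma separable_sub_countable_approx (d : Order.disp_t) (T : orderType d)
    (R : realType) (X : set (T -> R)) (I : countType) (h : I -> T -> R) :
  (forall f, X f -> forall e : R, 0 < e -> exists i, sup_close f (h i) e) ->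
  separable_sub X.
Proof.
move=> h_dense; pose near i m g := X g /\ sup_close (h i) g m.+1%:R^-1.
have /choice [G G_near] : forall c : I * nat, exists g,
    (exists g', near c.1 c.2 g') -> near c.1 c.2 g.
  move=> [i m]; have [[g ng]|no_g] := pselect (exists g, near i m g).
    by exists g.
  by exists (fun _ => 0) => /no_g.
exists [set g | X g /\ range G g].
  split=> [g []//|]; apply: (@sub_countable _ _ _ (range G)).
    by apply: subset_card_le => g [].
  exact: sub_countable (card_image_le _ _) (countableP _).
move=> f Xf eps eps_gt0.
have [m m_eps] := ltr_add_invr (divr_gt0 eps_gt0 (ltr0Sn _ 1)); rewrite add0r in m_eps.
have [i f_hi] := h_dense f Xf _ (ltac:(by rewrite invr_gt0) : 0 < m.+1%:R^-1).
have [XG hi_G] : near i m (G (i, m)).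
  by apply: (G_near (i, m)); exists f; split => // t; rewrite distrC.
exists (G (i, m)); first by split => //; exists (i, m).
move=> t; have := f_hi t; have := hi_G t; move: m.+1%:R^-1 m_eps => r r_eps hiG fhi.
have -> : f t - G (i, m) t = (f t - h i t) + (h i t - G (i, m) t) by ring.
by apply: (le_trans (ler_normD _ _)); lra.
Qed.

Section Ptilde.
Variables (d : Order.disp_t) (T : orderType d) (R : realType) (w1 sigma : T).

Lemma range_Ptilde_tail_const (g : T -> R) t :
  range_Ptilde w1 sigma g -> (sigma < t)%O -> g t = g w1.
Proof. by move=> [f _ ->] sigma_t; rewrite /Ptilde leNgt sigma_t if_same. Qed.

Lemma Ptilde_tail_const_id (f : T -> R) :
  (forall t, (sigma < t)%O -> f t = f w1) -> Ptilde w1 sigma f = f.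
Proof. by move=> tail; apply/funext => t; rewrite /Ptilde; case: leP => // /tail. Qed.

Lemma range_Ptilde_separable (X : set (T -> R)) :
  is_omega1_interval w1 -> sigma != w1 -> X `<=` @CK d T R ->
  X `<=` range_Ptilde w1 sigma -> separable_sub X.
Proof.
move=> [wo _ cnt _] sigma_w1 XC Xr.
have [e e_onto] := countable_sub_range sigma (cnt sigma sigma_w1).
apply: (@separable_sub_countable_approx _ _ _ _ _
  (fun c t => if (t <= sigma)%O then step_fun R e c.1 t else ratr c.2)).
move=> f Xf del del_gt0.
have [L [_ _ L_approx]] := step_fun_approx wo e_onto (XC _ Xf) del_gt0 (lexx sigma).
have [q fq] := exists_ratr_near (f w1) del_gt0.
exists (L, q) => t /=; case: (leP t sigma) => [ts|sigma_t]; first exact: L_approx.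
by rewrite (range_Ptilde_tail_const (Xr _ Xf) sigma_t) ltW.
Qed.

End Ptilde.

Theorem lemma4p2 (d : Order.disp_t) (T : orderType d) (w1 : T) (R : realType)
    (X : set (T -> R)) :
  is_omega1_interval w1 -> closed_subspace X ->
  (separable_sub X <->
   exists2 sigma : T, sigma != w1 & X `<=` @range_Ptilde d T R w1 sigma).
Proof.
move=> omega1 [XC _ _ _ _]; split; last first.
  by move=> [sigma sigma_w1]; apply: range_Ptilde_separable omega1 sigma_w1 XC.
move=> /(separable_sub_tail_const omega1 XC) [sigma sigma_w1 tail].
exists sigma => // f Xf; exists f; first exact: XC.
by rewrite Ptilde_tail_const_id // => t; apply: tail.
Qed.
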